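(* Let $\mu$ be a probability distribution on $(E,\mathscr{E})$. Let $\xi:E\to E$ be a measurable involution with $\mu\circ\xi^{-1}=\mu$, so that $Qf=f\circ\xi$ defines an isometric involution of $L^{2}(\mu)$. Assume: (1) $\psi:E\to E$ is a measurable bijection with $\psi^{-1}=\xi\circ\psi\circ\xi$; (2) $\phi:\mathbb{R}_{+}\to[0,1]$ satisfies $r\phi(r^{-1})=\phi(r)$ for $r>0$ and $\phi(0)=0$; (3) with $\nu:=\mu+\mu^{\xi\circ\psi}$, define for $z\in E$, $r(z):=\frac{{\rm d}\mu^{\xi\circ\psi}/{\rm d}\nu(z)}{{\rm d}\mu/{\rm d}\nu(z)}$ if both ${\rm d}\mu^{\xi\circ\psi}/{\rm d}\nu(z)>0$ and ${\rm d}\mu/{\rm d}\nu(z)>0$, and $r(z):=0$ otherwise. Then the Markov kernel \[P(z,{\rm d}z'):=\phi\circ r(z)\,\delta_{\psi(z)}({\rm d}z')+\big[1-\phi\circ r(z)\big]\delta_{\xi(z)}({\rm d}z')\] is $(\mu,Q)$-reversible.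
   Context: For a measurable $\varphi:E\to E$, $\mu^{\varphi}(A):=\mu(\varphi^{-1}(A))$. $\langle f,g\rangle_{\mu}=\int fg\,{\rm d}\mu$. A Markov kernel $P$ is $(\mu,Q)$-reversible if $\langle Pf,g\rangle_{\mu}=\langle f,QPQg\rangle_{\mu}$ for all $f,g\in L^{2}(\mu)$. *)

From HB Require Import structures.
From mathcomp Require Import all_boot all_order all_algebra.
From mathcomp Require Import all_classical all_reals all_analysis.
Set Implicit Arguments. Unset Strict Implicit. Unset Printing Implicit Defensive.
Import Order.TTheory GRing.Theory Num.Theory.
Local Open Scope classical_set_scope.
Local Open Scope ring_scope.

Section defs.
Context d (E : measurableType d) (R : realType).

Definition nu_sum (mu : set E -> \bar R) (xi psi : E -> E) : set E -> \bar R :=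
  fun A => (mu A + pushforward mu (xi \o psi) A)%E.

Definition is_RN_density (m n : set E -> \bar R) (h : E -> R) : Prop :=
  measurable_fun setT h /\ (forall z, 0 <= h z) /\
  forall A, measurable A -> m A = (\int[n]_(z in A) (h z)%:E)%E.

(* r(z) := h2 z / h1 z if h2 z > 0 and h1 z > 0, and 0 otherwise,
   with h1 = d mu / d nu and h2 = d mu^{xi o psi} / d nu *)
Definition ratio_r (h1 h2 : E -> R) : E -> R :=
  fun z => if (0 < h2 z) && (0 < h1 z) then h2 z / h1 z else 0.

(* action of the Markov kernel
   P(z,dz') = phi(r z) delta_{psi z}(dz') + (1 - phi(r z)) delta_{xi z}(dz')
   on a function f:  (P f)(z) = \int P(z,dz') f(z') *)
Definition kernelP (phi : R -> R) (r : E -> R) (psi xi : E -> E)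
  (f : E -> R) : E -> R :=
  fun z => phi (r z) * f (psi z) + (1 - phi (r z)) * f (xi z).

Definition Qop (xi : E -> E) (f : E -> R) : E -> R := f \o xi.

Definition L2 (mu : set E -> \bar R) (f : E -> R) : Prop :=
  measurable_fun setT f /\ mu.-integrable setT (fun z => ((f z) ^+ 2)%:E).

Definition inner (mu : set E -> \bar R) (f g : E -> R) : \bar R :=
  (\int[mu]_z (f z * g z)%:E)%E.

Definition muQ_reversible (mu : set E -> \bar R) (Pop Q : (E -> R) -> (E -> R)) :=
  forall f g, L2 mu f -> L2 mu g ->
    inner mu (Pop f) g = inner mu f (Q (Pop (Q g))).
End defs.

From HB Require Import structures.
From mathcomp Require Import all_boot all_order all_algebra.
From mathcomp Require Import all_classical all_reals all_analysis.
From mathcomp Require Import measurable_realfun ring lra.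
Set Implicit Arguments. Unset Strict Implicit. Unset Printing Implicit Defensive.
Import Order.TTheory GRing.Theory Num.Theory.
Local Open Scope classical_set_scope.
Local Open Scope ring_scope.

(* Write tau := xi \o psi, an involution.  The measure nu = mu + mu^tau is
   tau-invariant, so tau carries density to density: h2 = h1 \o tau and
   h1 = h2 \o tau nu-almost everywhere.  The symmetry r * phi (1 / r) = phi r
   then makes phi (r x) * h1 x tau-invariant nu-a.e. (detailed balance), i.e.
   the measure phi (r x) mu(dx) is tau-invariant.  As psi \o tau = xi, this
   turns the psi-move of <P f, g> into \int phi (r x) f (xi x) g (tau x), and
   the xi-invariance of mu rewrites <f, Q P Q g> into the same integral; the
   L^2 hypotheses make every integrand integrable. *)

Lemma measurable_inv (R : realType) : measurable_fun [set: R] (@GRing.inv R).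
Proof.
have -> : @GRing.inv R = fun x => if x == 0 then 0 else x^-1.
  by apply: funext => x; case: eqP => // ->; rewrite invr0.
apply: measurable_fun_if => //.
- exact: measurable_fun_eqr.
- have -> : [set: R] `&` (fun x => x == 0) @^-1` [set false] = [set x | x != 0].
    by apply/seteqP; split => x /=; [case => _ /negbT|move=> /negbTE ->].
  apply: open_continuous_measurable_fun; first exact: open_neq.
  by move=> x; rewrite inE => /inv_continuous.
Qed.

Section ratio.
Context d (T : measurableType d) (R : realType) (h1 h2 : T -> R).
Hypotheses (h1_ge0 : forall z, 0 <= h1 z) (h2_ge0 : forall z, 0 <= h2 z).

(* The case distinction in [ratio_r] is harmless because [x / 0 = 0]. *)
Lemma ratio_rE : ratio_r h1 h2 = fun z => h2 z / h1 z.
Proof.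
apply: funext => z; rewrite /ratio_r; case: ifPn => // /nandP[|]; rewrite -leNgt => h.
  by rewrite (@le_anti _ _ (h2 z) 0) ?h ?h2_ge0 ?mul0r.
by rewrite (@le_anti _ _ (h1 z) 0) ?h ?h1_ge0 ?invr0 ?mulr0.
Qed.

Lemma ratio_r_ge0 z : 0 <= ratio_r h1 h2 z.
Proof. by rewrite ratio_rE divr_ge0. Qed.

Lemma measurable_ratio_r : measurable_fun setT h1 -> measurable_fun setT h2 ->
  measurable_fun setT (ratio_r h1 h2).
Proof.
move=> mh1 mh2; rewrite ratio_rE.
by apply: measurable_funM => //; exact: measurableT_comp (@measurable_inv R) mh1.
Qed.

End ratio.

Lemma phi_ratio_swap (R : realFieldType) (phi : R -> R) (a b : R) :
  (forall x, 0 < x -> x * phi x^-1 = phi x) -> phi 0 = 0 ->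
  phi (if (0 < b) && (0 < a) then b / a else 0) * a =
  phi (if (0 < a) && (0 < b) then a / b else 0) * b.
Proof.
move=> phiV phi0.
have [a0|a0] := ltP 0 a; have [b0|b0] := ltP 0 b => /=; rewrite ?phi0 ?mul0r //.
have := phiV (b / a); rewrite divr_gt0 // invf_div => /(_ isT) <-.
by field; rewrite gt_eqF.
Qed.

Lemma normr_mul_le_sqr (R : realFieldType) (a u v : R) : 0 <= a <= 1 ->
  `|a * u * v| <= a * u ^+ 2 + v ^+ 2.
Proof.
case/andP=> a0 a1.
have h1 : 0 <= a * (u - v) ^+ 2 by rewrite mulr_ge0 ?sqr_ge0.
have h2 : 0 <= a * (u + v) ^+ 2 by rewrite mulr_ge0 ?sqr_ge0.
have h3 : 0 <= (1 - a) * v ^+ 2 by rewrite mulr_ge0 ?sqr_ge0 ?subr_ge0.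
rewrite ler_norml; apply/andP; split; nra.
Qed.

Lemma integrable_le_add d (T : measurableType d) (R : realType)
    (m : {measure set T -> \bar R}) (w A B : T -> R) : measurable_fun setT w ->
  m.-integrable setT (EFin \o A) -> m.-integrable setT (EFin \o B) ->
  (forall x, `|w x| <= A x + B x) -> m.-integrable setT (EFin \o w).
Proof.
move=> mw iA iB wAB; apply: le_integrable (integrableD measurableT iA iB) => //.
- exact/measurable_EFinP.
- by move=> x _ /=; rewrite lee_fin (le_trans (wAB x)) ?ler_norm.
Qed.

Section weighted_integral.
Context d (T : measurableType d) (R : realType) (m : {measure set T -> \bar R}).
Local Open Scope ereal_scope.

Lemma weighted_integral_comp (w : T -> R) (S : T -> T) :
  (forall x, 0 <= w x)%R ->
  (forall F, measurable_fun setT F -> (forall x, 0 <= F x) ->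
    \int[m]_x ((w x)%:E * F x) = \int[m]_x ((w x)%:E * F (S x))) ->
  forall F, measurable_fun setT F ->
    \int[m]_x ((w x)%:E * F x) = \int[m]_x ((w x)%:E * F (S x)).
Proof.
move=> w0 wS F mF; rewrite integralE [RHS]integralE.
have posE G x : (fun y => (w y)%:E * G y)^\+ x = (w x)%:E * G^\+ x.
  by rewrite !funeposE maxe_pMr ?mule0 ?lee_fin.
have negE G x : (fun y => (w y)%:E * G y)^\- x = (w x)%:E * G^\- x.
  by rewrite !funenegE -muleN maxe_pMr ?mule0 ?lee_fin.
congr (_ - _).
- under eq_integral do rewrite posE.
  under [RHS]eq_integral do rewrite (posE (F \o S)) funepos_comp.
  by rewrite wS; [|exact: measurable_funepos|exact: funepos_ge0].
- under eq_integral do rewrite negE.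
  under [RHS]eq_integral do rewrite (negE (F \o S)) funeneg_comp.
  by rewrite wS; [|exact: measurable_funeneg|exact: funeneg_ge0].
Qed.

End weighted_integral.

Section measure_preserving.
Context d (T : measurableType d) (R : realType) (m : {measure set T -> \bar R})
  (S : T -> T).
Hypotheses (mS : measurable_fun setT S)
  (m_S : forall A, measurable A -> m (S @^-1` A) = m A).
Local Open Scope ereal_scope.

(* The measure instance of [pushforward m S] depends on [mS], so it cannot be
   inferred and has to be named. *)
Let m_push := measure_function_pushforward__canonical__measure_function_Measure m mS.

Lemma ge0_integral_invariant_preimage (D : set T) (G : T -> \bar R) : measurable D ->
  measurable_fun setT G -> (forall x, 0 <= G x) ->
  \int[m]_(x in S @^-1` D) G (S x) = \int[m]_(x in D) G x.
Proof.
move=> mD mG G0; rewrite -(ge0_integral_pushforward mS) //; last first.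
  exact: measurable_funTS.
by apply: (eq_measure_integral m (m1 := m_push)) => A mA _; rewrite /= /pushforward m_S.
Qed.

Lemma ge0_integral_invariant (G : T -> \bar R) : measurable_fun setT G ->
  (forall x, 0 <= G x) -> \int[m]_x G (S x) = \int[m]_x G x.
Proof. by move=> mG G0; rewrite -[RHS](ge0_integral_invariant_preimage measurableT) ?preimage_setT. Qed.

Lemma integral_invariant (G : T -> \bar R) : measurable_fun setT G ->
  \int[m]_x G (S x) = \int[m]_x G x.
Proof.
move=> mG; have one F : \int[m]_x ((cst 1%R x)%:E * F x) = \int[m]_x F x.
  by apply: eq_integral => x _; rewrite mul1e.
rewrite -one -[RHS]one; symmetry; apply: (weighted_integral_comp (w := cst 1%R)) => //.
by move=> F mF F0; rewrite !one ge0_integral_invariant.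
Qed.

Lemma integrable_invariant (G : T -> \bar R) : m.-integrable setT G ->
  m.-integrable setT (G \o S).
Proof.
move=> iG; have /integrableP[mG _] := iG.
have /integrableP[mGabs iGabs] := integrable_abse iG.
apply/integrableP; split; first exact: measurableT_comp mG mS.
rewrite (ge0_integral_invariant (G := abse \o G)) // => [|x]; last exact: abse_ge0.
by move: iGabs; under eq_integral do rewrite /= abse_id.
Qed.

End measure_preserving.

Section RN_density.
Context d (T : measurableType d) (R : realType).
Local Open Scope ereal_scope.

Lemma integrable_RN_density (nu : {measure set T -> \bar R}) (m : set T -> \bar R)
    (h : T -> R) :
  m setT < +oo -> is_RN_density m nu h -> nu.-integrable setT (EFin \o h).
Proof.
move=> mfin [mh [h0 mE]]; apply/integrableP; split; first exact/measurable_EFinP.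
rewrite (eq_integral (fun x => (h x)%:E)) -?mE // => x _.
by rewrite /comp abse_EFin ger0_norm.
Qed.

Lemma RN_density_ae_eq (nu : {measure set T -> \bar R}) (m : set T -> \bar R)
    (h h' : T -> R) : m setT < +oo ->
  is_RN_density m nu h -> is_RN_density m nu h' ->
  ae_eq nu setT (EFin \o h) (EFin \o h').
Proof.
move=> mfin dh dh'; have [mh' [_ mE']] := dh'; have [_ [_ mE]] := dh.
apply: integral_ae_eq => //; first exact: integrable_RN_density dh.
- exact/measurable_EFinP.
- by move=> A _ mA; rewrite -mE // -mE'.
Qed.

Lemma ge0_integral_RN_density (m : {finite_measure set T -> \bar R})
    (nu : {sigma_finite_measure set T -> \bar R}) (h : T -> R) (f : T -> \bar R) :
  is_RN_density m nu h -> measurable_fun setT f -> (forall x, 0 <= f x) ->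
  \int[nu]_x (f x * (h x)%:E) = \int[m]_x f x.
Proof.
move=> dh mf f0; have [mh [_ mE]] := dh.
have m_nu : m `<< nu.
  apply/null_content_dominatesP => A mA nuA0.
  by rewrite mE // null_set_integral //; apply/measurable_funTS/measurable_EFinP.
pose g := Radon_Nikodym_SigmaFinite.f m nu.
have ig : nu.-integrable setT g by exact: Radon_Nikodym_SigmaFinite.f_integrable.
have hg : ae_eq nu setT (EFin \o h) g.
  apply: integral_ae_eq => //; first exact: integrable_RN_density (fin_num_fun_lty _) dh.
  - exact: measurable_int ig.
  - by move=> A _ mA; rewrite -mE // -Radon_Nikodym_SigmaFinite.f_integral.
rewrite -(Radon_Nikodym_SigmaFinite.change_of_variables m_nu) //.
apply: ae_eq_integral => //.
- by apply: emeasurable_funM => //; exact/measurable_EFinP.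
- by apply: emeasurable_funM => //; exact: measurable_int ig.
- exact: ae_eqe_mul2l.
Qed.

End RN_density.

Lemma is_RN_density_pushforward d (T : measurableType d) (R : realType)
    (nu : {measure set T -> \bar R}) (tau : T -> T) (m : set T -> \bar R) (h : T -> R) :
  measurable_fun setT tau -> involutive tau ->
  (forall A, measurable A -> nu (tau @^-1` A) = nu A) ->
  is_RN_density m nu h -> is_RN_density (pushforward m tau) nu (h \o tau).
Proof.
move=> mtau tauK nu_tau [mh [h0 mE]]; split; first exact: measurableT_comp mh mtau.
split=> [z|A mA]; first exact: h0.
have mtauA : measurable (tau @^-1` A).
  by rewrite -[X in measurable X]setTI; exact: mtau.
rewrite /pushforward mE //.
rewrite -(ge0_integral_invariant_preimage mtau nu_tau mA (G := EFin \o h \o tau)) //=.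
- by apply: eq_integral => x _; rewrite /= tauK.
- exact/measurable_EFinP/measurableT_comp.
- by move=> x; rewrite lee_fin.
Qed.

Section reversibility.
Context d (E : measurableType d) (R : realType) (mu : probability E R)
  (xi psi : E -> E) (phi : R -> R) (h1 h2 : E -> R).
Hypotheses (mxi : measurable_fun setT xi) (xiK : involutive xi)
  (mu_xi : forall A, measurable A -> mu (xi @^-1` A) = mu A)
  (mpsi : measurable_fun setT psi)
  (psi_xiK : forall z, psi (xi (psi (xi z))) = z)
  (xi_psiK : forall z, xi (psi (xi (psi z))) = z)
  (phi01 : forall x, 0 <= x -> 0 <= phi x <= 1)
  (phiV : forall x, 0 < x -> x * phi x^-1 = phi x)
  (phi0 : phi 0 = 0)
  (mphi : measurable_fun [set x : R | 0 <= x] phi)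
  (dh1 : is_RN_density mu (nu_sum mu xi psi) h1)
  (dh2 : is_RN_density (pushforward mu (xi \o psi)) (nu_sum mu xi psi) h2).

Let tau := xi \o psi.
Let mtau : measurable_fun setT tau. Proof. exact: measurableT_comp. Qed.
Let tauK : involutive tau. Proof. exact: xi_psiK. Qed.
Let psi_tau x : psi (tau x) = xi x. Proof. by have := psi_xiK (xi x); rewrite xiK. Qed.

Let mu_tau := measure_function_pushforward__canonical__measure_function_Measure mu mtau.
Let nu_add : {measure set E -> \bar R} := measure_add mu mu_tau.
Let nu_add_fin : fin_num_fun nu_add.
Proof.
have : (measure_add mu mu_tau setT < +oo)%E.
  by rewrite measure_addE /= /pushforward preimage_setT probability_setT -EFinD ltry.
exact: lty_fin_num_fun.
Qed.
(* Radon-Nikodym change of variables needs [nu] as a finite measure. *)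
Let nu : {finite_measure set E -> \bar R} :=
  HB.pack (Measure.sort nu_add) (Measure_isFinite.Build _ _ _ nu_add nu_add_fin).

Let nu_sumE : nu_sum mu xi psi = nu.
Proof. by apply: funext => A; exact/esym/(measure_addE mu mu_tau A). Qed.

Let mu_tau_tau : pushforward (pushforward mu tau) tau = mu.
Proof.
apply: funext => A; rewrite /pushforward; congr (mu _).
by apply/seteqP; split => x /=; rewrite tauK.
Qed.

Let nu_tau A : measurable A -> nu (tau @^-1` A) = nu A.
Proof.
move=> _; rewrite -nu_sumE /nu_sum addeC; congr (_ + _).
by rewrite -[in RHS]mu_tau_tau.
Qed.

Let dh1_nu : is_RN_density mu nu h1. Proof. by rewrite -nu_sumE. Qed.
Let dh2_nu : is_RN_density (pushforward mu tau) nu h2. Proof. by rewrite -nu_sumE. Qed.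
Let mh1 : measurable_fun setT h1. Proof. by case: dh1. Qed.
Let mh2 : measurable_fun setT h2. Proof. by case: dh2. Qed.
Let h1_ge0 x : 0 <= h1 x. Proof. by case: dh1 => _ []. Qed.
Let h2_ge0 x : 0 <= h2 x. Proof. by case: dh2 => _ []. Qed.

Let r := ratio_r h1 h2.

Let phi_r01 x : 0 <= phi (r x) <= 1.
Proof. exact/phi01/ratio_r_ge0. Qed.

Let mphi_r : measurable_fun setT (fun x => phi (r x)).
Proof.
apply: (measurable_comp (F := [set x : R | 0 <= x])) => //.
- by rewrite -set_itvcy; exact: measurable_itv.
- by move=> _ [x _ <-]; exact: ratio_r_ge0.
- exact: measurable_ratio_r.
Qed.

Let mphi_r_h1 : measurable_fun setT (fun x => (phi (r x) * h1 x)%:E).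
Proof. exact/measurable_EFinP/measurable_funM. Qed.

Lemma detailed_balance : ae_eq nu setT (fun x => (phi (r x) * h1 x)%:E)
  (fun x => (phi (r (tau x)) * h1 (tau x))%:E).
Proof.
have mu_fin : (mu setT < +oo)%E by rewrite probability_setT ltry.
have mu_tau_fin : (pushforward mu tau setT < +oo)%E.
  by rewrite /pushforward preimage_setT.
have dh2_tau : is_RN_density mu nu (h2 \o tau).
  rewrite -[X in is_RN_density X]mu_tau_tau.
  exact: is_RN_density_pushforward mtau tauK nu_tau dh2_nu.
have h2E := RN_density_ae_eq mu_tau_fin dh2_nu
  (is_RN_density_pushforward mtau tauK nu_tau dh1_nu).
have h1E := RN_density_ae_eq mu_fin dh1_nu dh2_tau.
move: h2E h1E; apply: filterS2 => x /= h2E h1E _.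
case: (h2E I) => {}h2E; case: (h1E I) => {}h1E.
by rewrite /r /ratio_r h2E h1E; congr EFin; exact: phi_ratio_swap.
Qed.

Let mphi_r_h1_tau : measurable_fun setT (fun x => (phi (r (tau x)) * h1 (tau x))%:E).
Proof. exact: measurableT_comp mphi_r_h1 mtau. Qed.

Let phi_r_h1_ge0 x : (0 <= (phi (r x) * h1 x)%:E)%E.
Proof. by rewrite lee_fin mulr_ge0 ?(andP (phi_r01 x)).1. Qed.

Lemma ge0_integral_phi_r_comp (F : E -> \bar R) : measurable_fun setT F ->
  (forall x, 0 <= F x)%E ->
  (\int[mu]_x ((phi (r x))%:E * F x) = \int[mu]_x ((phi (r x))%:E * F (tau x)))%E.
Proof.
move=> mF F0; have mFtau : measurable_fun setT (F \o tau) by exact: measurableT_comp.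
have to_nu G : measurable_fun setT G -> (forall x, 0 <= G x)%E ->
    (\int[mu]_x ((phi (r x))%:E * G x) =
     \int[nu]_x ((phi (r x) * h1 x)%:E * G x))%E.
  move=> mG G0; rewrite -(ge0_integral_RN_density dh1_nu); last 2 first.
  - exact/emeasurable_funM/mG/measurable_EFinP.
  - by move=> x; rewrite mule_ge0 ?lee_fin ?(andP (phi_r01 x)).1.
  by apply: eq_integral => x _; rewrite EFinM muleAC.
rewrite !to_nu //.
transitivity (\int[nu]_x ((phi (r (tau x)) * h1 (tau x))%:E * F (tau (tau x))))%E.
  under [RHS]eq_integral do rewrite tauK.
  apply: ae_eq_integral => //; try exact: emeasurable_funM.
  by move: detailed_balance; apply: filterS => x /= e /e ->.
rewrite (ge0_integral_invariant mtau nu_tau (G := fun y => (phi (r y) * h1 y)%:E * F (tau y)))%E //.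
- exact: emeasurable_funM.
- by move=> x; rewrite mule_ge0.
Qed.

Lemma integral_phi_r_comp (F : E -> R) : measurable_fun setT F ->
  (\int[mu]_x (phi (r x) * F x)%:E = \int[mu]_x (phi (r x) * F (tau x))%:E)%E.
Proof.
move=> mF; under eq_integral do rewrite EFinM; under [RHS]eq_integral do rewrite EFinM.
apply: weighted_integral_comp; last exact/measurable_EFinP.
- by move=> x; case/andP: (phi_r01 x).
- exact: ge0_integral_phi_r_comp.
Qed.

Lemma integrable_phi_r_comp (F : E -> R) : (forall x, 0 <= F x) ->
  mu.-integrable setT (EFin \o F) ->
  mu.-integrable setT (fun x => (phi (r x) * F (tau x))%:E).
Proof.
move=> F0 /integrableP[/measurable_EFinP mF iF_lty].
apply/integrableP; split.
  by apply/measurable_EFinP/measurable_funM => //; exact: measurableT_comp.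
have phi_r_ge0 x : 0 <= phi (r x) by case/andP: (phi_r01 x).
under eq_integral do rewrite abse_EFin ger0_norm ?mulr_ge0 // EFinM.
rewrite -(ge0_integral_phi_r_comp (F := EFin \o F)) //; last exact/measurable_EFinP.
move: iF_lty; under eq_integral do rewrite /comp abse_EFin ger0_norm //.
apply: le_lt_trans; apply: ge0_le_integral => //.
- by move=> x _; rewrite mule_ge0 ?lee_fin.
- by apply: emeasurable_funM; exact/measurable_EFinP.
- exact/measurable_EFinP.
- by move=> x _; rewrite -EFinM lee_fin ler_piMl // (andP (phi_r01 x)).2.
Qed.

Section L2_pair.
Variables f g : E -> R.
Hypotheses (Lf : L2 mu f) (Lg : L2 mu g).

Let mf : measurable_fun setT f. Proof. by case: Lf. Qed.
Let mg : measurable_fun setT g. Proof. by case: Lg. Qed.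
Let mfxi : measurable_fun setT (f \o xi). Proof. exact: measurableT_comp. Qed.
Let mfpsi : measurable_fun setT (f \o psi). Proof. exact: measurableT_comp. Qed.
Let mgtau : measurable_fun setT (g \o tau). Proof. exact: measurableT_comp. Qed.

Let integrable_fxi2 : mu.-integrable setT (fun x => (f (xi x) ^+ 2)%:E).
Proof. by case: Lf => _ /(integrable_invariant mxi mu_xi). Qed.

Let integrable_g2 : mu.-integrable setT (fun x => (g x ^+ 2)%:E).
Proof. by case: Lg. Qed.

Let integrable_phi_fpsi2 : mu.-integrable setT (fun x => (phi (r x) * f (psi x) ^+ 2)%:E).
Proof.
apply: eq_integrable (integrable_phi_r_comp _ integrable_fxi2) => // [x _|x]; last exact: sqr_ge0.
by rewrite /tau /= xiK.
Qed.

Let integrable_phi_gtau2 : mu.-integrable setT (fun x => (phi (r x) * g (tau x) ^+ 2)%:E).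
Proof. by apply: integrable_phi_r_comp integrable_g2 => x; exact: sqr_ge0. Qed.

Let integrable_phi_fpsi_g :
  mu.-integrable setT (fun x => (phi (r x) * f (psi x) * g x)%:E).
Proof.
apply: integrable_le_add integrable_phi_fpsi2 integrable_g2 _ => [|x]; last exact: normr_mul_le_sqr.
by apply: measurable_funM => //; exact: measurable_funM.
Qed.

Let integrable_phi_fxi_gtau :
  mu.-integrable setT (fun x => (phi (r x) * f (xi x) * g (tau x))%:E).
Proof.
apply: integrable_le_add integrable_fxi2 integrable_phi_gtau2 _ => [|x].
  by apply: measurable_funM => //; exact: measurable_funM.
by rewrite mulrAC addrC; exact/normr_mul_le_sqr/phi_r01.
Qed.

Let integrable_phiC_fxi_g :
  mu.-integrable setT (fun x => ((1 - phi (r x)) * f (xi x) * g x)%:E).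
Proof.
apply: integrable_le_add integrable_fxi2 integrable_g2 _ => [|x].
  apply: measurable_funM => //; apply: measurable_funM => //.
  exact: measurable_funB.
have /andP[phi_r0 phi_r1] := phi_r01 x.
have a01 : 0 <= 1 - phi (r x) <= 1 by apply/andP; split; lra.
apply: le_trans (normr_mul_le_sqr (f (xi x)) (g x) a01) _.
by rewrite lerD2r ler_piMl ?sqr_ge0 //; lra.
Qed.

Lemma inner_kernelP : inner mu (kernelP phi r psi xi f) g =
  (\int[mu]_x (phi (r x) * f (xi x) * g (tau x))%:E +
   \int[mu]_x ((1 - phi (r x)) * f (xi x) * g x)%:E)%E.
Proof.
rewrite /inner /kernelP; under eq_integral do rewrite mulrDl EFinD.
rewrite integralD //; congr (_ + _)%E.
under eq_integral do rewrite -mulrA.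
rewrite integral_phi_r_comp; last exact: measurable_funM mfpsi mg.
by apply: eq_integral => x _; rewrite psi_tau mulrA.
Qed.

Lemma inner_Q_kernelP_Q : inner mu f (Qop xi (kernelP phi r psi xi (Qop xi g))) =
  (\int[mu]_x (phi (r x) * f (xi x) * g (tau x))%:E +
   \int[mu]_x ((1 - phi (r x)) * f (xi x) * g x)%:E)%E.
Proof.
rewrite -integralD // /inner /Qop /kernelP -[RHS](integral_invariant mxi mu_xi).
  apply: eq_integral => x _ /=; rewrite !xiK -EFinD /tau /=; congr EFin; ring.
by apply: emeasurable_funD; [exact: measurable_int integrable_phi_fxi_gtau|
  exact: measurable_int integrable_phiC_fxi_g].
Qed.

End L2_pair.

Lemma kernelP_muQ_reversible :
  muQ_reversible mu (kernelP phi (ratio_r h1 h2) psi xi) (Qop xi).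
Proof. by move=> f g Lf Lg; rewrite inner_kernelP // inner_Q_kernelP_Q. Qed.

End reversibility.

Theorem proposition3p5 (d : measure_display) (E : measurableType d)
  (R : realType) (mu : probability E R) (xi psi : E -> E) (phi : R -> R)
  (h1 h2 : E -> R) :
  measurable_fun setT xi ->
  (forall z, xi (xi z) = z) ->
  (forall A, measurable A -> mu (xi @^-1` A) = mu A) ->
  measurable_fun setT psi ->
  (forall z, psi (xi (psi (xi z))) = z) ->
  (forall z, xi (psi (xi (psi z))) = z) ->
  (forall x, 0 <= x -> 0 <= phi x <= 1) ->
  (forall x, 0 < x -> x * phi x^-1 = phi x) ->
  phi 0 = 0 ->
  measurable_fun [set x : R | 0 <= x] phi ->
  is_RN_density mu (nu_sum mu xi psi) h1 ->
  is_RN_density (pushforward mu (xi \o psi)) (nu_sum mu xi psi) h2 ->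
  muQ_reversible mu (kernelP phi (ratio_r h1 h2) psi xi) (Qop xi).
Proof. by move=> *; apply: kernelP_muQ_reversible. Qed.
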